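(* Let $G$ be a group and $H$ a subgroup. Let $\sim$ be a nontrivial equivalence relation on $G/H - \{\bar{1}\}$ such that if $\bar{a} \sim \bar{b}$ and $\bar{a} \neq \bar{b}$ then $\overline{a^{-1}} \sim \overline{a^{-1}b}$. Let $a,b \in G$. If $\overline{g^{-1}a} \sim \overline{g^{-1}b}$ for all $g \notin aH \cup bH$, then $\bar{a} = \bar{b}$.
   Context: $G/H$ is the set of left cosets and $\bar{a} = aH$. An equivalence relation is nontrivial if it has at least two classes. *)

Set Implicit Arguments.

Record group := Group {
  carrier :> Type;
  gmul : carrier -> carrier -> carrier;
  gone : carrier;
  ginv : carrier -> carrier;
  gmulA : forall x y z, gmul x (gmul y z) = gmul (gmul x y) z;
  gmul1l : forall x, gmul gone x = x;
  gmul1r : forall x, gmul x gone = x;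
  gmulVl : forall x, gmul (ginv x) x = gone;
  gmulVr : forall x, gmul x (ginv x) = gone
}.

Arguments gmul {g}.
Arguments gone {g}.
Arguments ginv {g}.

Definition is_subgroup {G : group} (H : G -> Prop) : Prop :=
  H gone /\ (forall x y, H x -> H y -> H (gmul x y)) /\ (forall x, H x -> H (ginv x)).

(* Equality of left cosets: aH = bH  <->  a^{-1} b in H. *)
Definition coset_eq {G : group} (H : G -> Prop) (a b : G) : Prop :=
  H (gmul (ginv a) b).

Definition in_lcoset {G : group} (H : G -> Prop) (a g : G) : Prop :=
  H (gmul (ginv a) g).

(* An equivalence relation on G/H - {1bar}, encoded on representatives:
   R relates only elements outside H (i.e. cosets different from 1bar = H),
   depends only on the cosets of its arguments, and is an equivalence
   relation on the set {a | a not in H}. *)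
Definition coset_equiv {G : group} (H : G -> Prop) (R : G -> G -> Prop) : Prop :=
  (forall a b, R a b -> ~ H a /\ ~ H b) /\
  (forall a a' b b', coset_eq H a a' -> coset_eq H b b' -> R a b -> R a' b') /\
  (forall a, ~ H a -> R a a) /\
  (forall a b, R a b -> R b a) /\
  (forall a b c, R a b -> R b c -> R a c).

(* Nontrivial: at least two equivalence classes. *)
Definition nontrivial_coset_equiv {G : group} (H : G -> Prop) (R : G -> G -> Prop) : Prop :=
  exists a b, ~ H a /\ ~ H b /\ ~ R a b.

(** Suppose [aH <> bH] and put [c = a^-1 b], so [c] is not in [H].  Every
    [v] outside [H] is then related to [c]: either [vH = cH], or [g = a v]
    lies outside [aH u bH] and the hypothesis yields [v^-1 ~ v^-1 c], which
    the defining property of [~] turns into [v ~ c].  Hence [~] has a single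
    class, contradicting nontriviality. *)

From Stdlib Require Import Classical.

Section GroupLaws.
Variable G : group.

Lemma mulg_inv_uniq (x y : G) : gmul x y = gone -> y = ginv x.
Proof.
  intro E.
  rewrite <- (gmul1l G y), <- (gmulVl G x), <- gmulA, E, gmul1r.
  reflexivity.
Qed.

Lemma invgK (x : G) : ginv (ginv x) = x.
Proof. symmetry. apply mulg_inv_uniq, gmulVl. Qed.

Lemma invMg (x y : G) : ginv (gmul x y) = gmul (ginv y) (ginv x).
Proof.
  symmetry. apply mulg_inv_uniq.
  rewrite gmulA, <- (gmulA G x y), gmulVr, gmul1r, gmulVr.
  reflexivity.
Qed.

Lemma mulKg (x y : G) : gmul (ginv x) (gmul x y) = y.
Proof. rewrite gmulA, gmulVl, gmul1l. reflexivity. Qed.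

Lemma mulKVg (x y : G) : gmul x (gmul (ginv x) y) = y.
Proof. rewrite gmulA, gmulVr, gmul1l. reflexivity. Qed.

End GroupLaws.

Section Cosets.
Variables (G : group) (H : G -> Prop).
Hypothesis subH : is_subgroup H.

Lemma coset_eq_refl (a : G) : coset_eq H a a.
Proof.
  destruct subH as [H1 _]. unfold coset_eq. rewrite gmulVl. exact H1.
Qed.

Lemma coset_eq_sym (a b : G) : coset_eq H a b -> coset_eq H b a.
Proof.
  destruct subH as [_ [_ HV]]. unfold coset_eq. intro Hab.
  rewrite <- (invgK G a), <- invMg. apply HV. exact Hab.
Qed.

End Cosets.

Section CosetRelation.
Variables (G : group) (H : G -> Prop) (R : G -> G -> Prop).
Hypothesis subH : is_subgroup H.
Hypothesis equivR : coset_equiv H R.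
Hypothesis R_inv_shift : forall a b : G, R a b -> ~ coset_eq H a b ->
  R (ginv a) (gmul (ginv a) b).

Lemma R_of_coset_eq (v c : G) : ~ H c -> coset_eq H v c -> R v c.
Proof.
  destruct equivR as [_ [Rcoset [Rrefl _]]]. intros Hc Hvc.
  apply (Rcoset c v c c).
  - apply coset_eq_sym; assumption.
  - apply coset_eq_refl; assumption.
  - apply Rrefl. exact Hc.
Qed.

Lemma R_of_inv_pair (v c : G) :
  ~ H c -> R (ginv v) (gmul (ginv v) c) -> R v c.
Proof.
  intros Hc Rvc.
  assert (Hsep : ~ coset_eq H (ginv v) (gmul (ginv v) c)).
  { unfold coset_eq. rewrite invgK, mulKVg. exact Hc. }
  pose proof (R_inv_shift _ _ Rvc Hsep) as Rshift.
  rewrite invgK, mulKVg in Rshift. exact Rshift.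
Qed.

Lemma R_to_quotient (a b : G) :
  (forall g : G, ~ in_lcoset H a g -> ~ in_lcoset H b g ->
     R (gmul (ginv g) a) (gmul (ginv g) b)) ->
  ~ coset_eq H a b ->
  forall v : G, ~ H v -> R v (gmul (ginv a) b).
Proof.
  intros Hyp Hab v Hv. set (c := gmul (ginv a) b).
  destruct (classic (coset_eq H v c)) as [Hvc | Hvc].
  - apply R_of_coset_eq; assumption.
  - apply R_of_inv_pair; [exact Hab |].
    assert (Hb : ~ in_lcoset H b (gmul a v)).
    { intro Hb. apply Hvc. apply coset_eq_sym; [exact subH |].
      unfold coset_eq, c. rewrite invMg, invgK, <- gmulA. exact Hb. }
    assert (Ha : ~ in_lcoset H a (gmul a v)).
    { unfold in_lcoset. rewrite mulKg. exact Hv. }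
    pose proof (Hyp (gmul a v) Ha Hb) as Rav.
    rewrite invMg, <- gmulA, gmulVl, gmul1r, <- gmulA in Rav.
    exact Rav.
Qed.

Lemma universal_class_not_nontrivial (c : G) :
  (forall v : G, ~ H v -> R v c) -> ~ nontrivial_coset_equiv H R.
Proof.
  destruct equivR as [_ [_ [_ [Rsym Rtrans]]]].
  intros Hc [x [y [Hx [Hy Nxy]]]].
  apply Nxy. apply (Rtrans x c y).
  - apply Hc. exact Hx.
  - apply Rsym, Hc. exact Hy.
Qed.

End CosetRelation.

Theorem lemma3p8 (G : group) (H : G -> Prop) (R : G -> G -> Prop) :
  is_subgroup H ->
  coset_equiv H R ->
  nontrivial_coset_equiv H R ->
  (forall a b : G, R a b -> ~ coset_eq H a b ->
     R (ginv a) (gmul (ginv a) b)) ->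
  forall a b : G,
    (forall g : G, ~ in_lcoset H a g -> ~ in_lcoset H b g ->
       R (gmul (ginv g) a) (gmul (ginv g) b)) ->
    coset_eq H a b.
Proof.
  intros subH equivR nontrivR R_inv_shift a b Hyp.
  apply NNPP. intro Hab.
  apply (universal_class_not_nontrivial G H R equivR (gmul (ginv a) b)); [| exact nontrivR].
  exact (R_to_quotient G H R subH equivR R_inv_shift a b Hyp Hab).
Qed.
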